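(* Let $a=1/\sqrt3$ and $b=\sqrt{2/3}$, and consider the eleven unit vectors in $\mathbb{R}^4$ given by the columns of $$\begin{pmatrix}1&0&0&0&0&a&a&a&a&a&a\\0&a&-a&a&a&b&-b&0&0&0&0\\0&a&a&-a&a&0&0&b&-b&0&0\\0&a&a&a&-a&0&0&0&0&b&-b\end{pmatrix}.$$ To each column $(r_0,r_1,r_2,r_3)$ associate the element of $\operatorname{PU}(2)$ represented by $r_0I+i(r_1X+r_2Y+r_3Z)$, and give the first element weight $1/16$ and each of the remaining ten weight $3/32$. This weighted set of $11$ elements is a weighted unitary $2$-design in $\operatorname{PU}(2)$.
   Context: $X,Y,Z$ are the Pauli matrices $X=\begin{pmatrix}0&1\\1&0\end{pmatrix}$, $Y=\begin{pmatrix}0&-i\\i&0\end{pmatrix}$, $Z=\begin{pmatrix}1&0\\0&-1\end{pmatrix}$. $\operatorname{PU}(2)=\operatorname{U}(2)/\operatorname{U}(1)$ with Haar probability measure $\mu$. A weighted unitary $2$-design is a finite $\mathscr{D}\subset\operatorname{PU}(d)$ with weights $w>0$, $\sum w=1$, and $\sum_{x}w(x)U(x)^{\otimes2}\otimes(U(x)^{\otimes2})^\dagger=\int d\mu(x)U(x)^{\otimes2}\otimes(U(x)^{\otimes2})^\dagger$, $U(x)$ a representative of $x$. *)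

From Stdlib Require Import Reals Lra List.
Import ListNotations.
Open Scope R_scope.

Definition C := (R * R)%type.
Definition C0 : C := (0, 0).
Definition C1 : C := (1, 0).
Definition Ci : C := (0, 1).
Definition Cadd (x y : C) : C := (fst x + fst y, snd x + snd y).
Definition Cmul (x y : C) : C :=
  (fst x * fst y - snd x * snd y, fst x * snd y + snd x * fst y).
Definition Cconj (x : C) : C := (fst x, - snd x).
Definition Cscale (r : R) (x : C) : C := (r * fst x, r * snd x).
Definition Cnorm2 (x : C) : R := fst x * fst x + snd x * snd x.

(* ---------- 2x2 complex matrices, indices in bool (false = 0, true = 1) ---------- *)
Definition M2 := bool -> bool -> C.

Definition Id2 : M2 := fun i j => if Bool.eqb i j then C1 else C0.
Definition PauliX : M2 := fun i j => if Bool.eqb i j then C0 else C1.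
Definition PauliY : M2 := fun i j =>
  match i, j with
  | false, true => (0, -1)
  | true, false => (0, 1)
  | _, _ => C0
  end.
Definition PauliZ : M2 := fun i j =>
  match i, j with
  | false, false => C1
  | true, true => (-1, 0)
  | _, _ => C0
  end.

Definition su2 (r0 r1 r2 r3 : R) : M2 := fun p q =>
  Cadd (Cscale r0 (Id2 p q))
       (Cmul Ci (Cadd (Cscale r1 (PauliX p q))
                      (Cadd (Cscale r2 (PauliY p q)) (Cscale r3 (PauliZ p q))))).

(* Entry ((a,b,c,d),(e,f,g,h)) of U^{(x)2} (x) (U^{(x)2})^dagger:
   (U (x) U)_{(a,b),(e,f)} * ((U (x) U)^dagger)_{(c,d),(g,h)}
   = U_{a e} U_{b f} conj(U_{g c}) conj(U_{h d}). *)
Definition moment_entry (U : M2) (a b c d e f g h : bool) : C :=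
  Cmul (Cmul (U a e) (U b f)) (Cmul (Cconj (U g c)) (Cconj (U h d))).

Definition same_in_PU2 (U V : M2) : Prop :=
  exists lam : C, Cnorm2 lam = 1 /\ forall p q, U p q = Cmul lam (V p q).

(* Every element of PU(2) has a representative r0 I + i(r1 X + r2 Y + r3 Z) with
   r in the unit sphere S^3 (i.e. in SU(2)); the Haar probability measure on PU(2)
   is the push-forward of the normalised uniform (Haar) measure on S^3 = SU(2).
   We integrate over S^3 in hyperspherical coordinates
     r = (cos psi, sin psi cos th, sin psi sin th cos ph, sin psi sin th sin ph),
   psi, th in [0,pi], ph in [0,2pi], density sin^2 psi sin th, total mass 2 pi^2. *)
Definition is_RInt (f : R -> R) (lo hi v : R) : Prop :=
  exists pr : Riemann_integrable f lo hi, RiemannInt pr = v.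

Definition haar_integral_PU2 (F : R -> R -> R -> R -> R) (v : R) : Prop :=
  exists (g : R -> R -> R) (h : R -> R),
    (forall psi th,
       is_RInt (fun ph =>
          F (cos psi) (sin psi * cos th) (sin psi * sin th * cos ph)
            (sin psi * sin th * sin ph) * (sin psi ^ 2 * sin th))
         0 (2 * PI) (g psi th)) /\
    (forall psi, is_RInt (g psi) 0 PI (h psi)) /\
    is_RInt h 0 PI (2 * PI ^ 2 * v).

Definition ca : R := 1 / sqrt 3.
Definition cb : R := sqrt (2 / 3).

Definition design_points : list (R * R * R * R) :=
  [ (1, 0, 0, 0);
    (0, ca, ca, ca);
    (0, -ca, ca, ca);
    (0, ca, -ca, ca);
    (0, ca, ca, -ca);
    (ca, cb, 0, 0);
    (ca, -cb, 0, 0);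
    (ca, 0, cb, 0);
    (ca, 0, -cb, 0);
    (ca, 0, 0, cb);
    (ca, 0, 0, -cb) ].

Definition design_weights : list R :=
  [ 1/16; 3/32; 3/32; 3/32; 3/32; 3/32; 3/32; 3/32; 3/32; 3/32; 3/32 ].

Definition pt_mat (r : R * R * R * R) : M2 :=
  match r with (r0, r1, r2, r3) => su2 r0 r1 r2 r3 end.

Definition pt (i : nat) : M2 := pt_mat (nth i design_points (0, 0, 0, 0)).
Definition wt (i : nat) : R := nth i design_weights 0.

Fixpoint Csum (n : nat) (f : nat -> C) : C :=
  match n with O => C0 | S k => Cadd (Csum k f) (f k) end.

Definition weighted_moment (a b c d e f g h : bool) : C :=
  Csum 11 (fun i => Cscale (wt i) (moment_entry (pt i) a b c d e f g h)).

From Coquelicot Require Import Coquelicot.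
From Stdlib Require Import Reals Lra Lia List Nsatz.
From Pilot Require Import Defs.
Open Scope R_scope.

(* Every entry of U (x) U (x) (U (x) U)^dagger, for U = r0 I + i (r1 X + r2 Y + r3 Z), has real
   and imaginary parts that are homogeneous quartics in r.  The Haar integral (an integral over
   the 3-sphere) and the weighted average over the eleven points are both linear, so it suffices
   that they agree on the 35 quartic monomials.  In hyperspherical coordinates the integral of a
   monomial factors into three integrals of cos^p sin^q, given by Wallis-type reduction formulas,
   and the comparison is a finite computation using a^2 = 1/3 and b^2 = 2/3.  The points are
   distinct in PU(2) because two such representatives of the same class differ by a real phase
   +-1, and no two columns are equal up to sign. *)

(* [Defs] rebinds [is_RInt]; [has_integral] is Coquelicot's predicate. *)
Local Notation has_integral := Coquelicot.RInt.is_RInt.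

Lemma has_integral_ext (f g : R -> R) (a b u v : R) :
  (forall x, f x = g x) -> u = v -> has_integral f a b u -> has_integral g a b v.
Proof. intros fg <-. apply (is_RInt_ext (V := R_NormedModule) f); auto. Qed.

Lemma has_integral_lincomb (f g : R -> R) (a b u v k l : R) :
  has_integral f a b u -> has_integral g a b v ->
  has_integral (fun x => k * f x + l * g x) a b (k * u + l * v).
Proof.
  intros Hf Hg.
  exact (is_RInt_plus _ _ a b _ _ (is_RInt_scal f a b k u Hf) (is_RInt_scal g a b l v Hg)).
Qed.

Lemma has_integral_scal (f : R -> R) (a b u k : R) :
  has_integral f a b u -> has_integral (fun x => k * f x) a b (k * u).
Proof. exact (is_RInt_scal f a b k u). Qed.

Lemma has_integral_antiderivative (F f : R -> R) (a b : R) :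
  (forall x, is_derive F x (f x)) -> (forall x, continuous f x) ->
  has_integral f a b (F b - F a).
Proof. intros HF Hf. apply (is_RInt_derive F f); auto. Qed.

Lemma continuous_of_ex_derive (f : R -> R) (x : R) : ex_derive f x -> continuous f x.
Proof. exact (ex_derive_continuous (K := R_AbsRing) (V := R_NormedModule) f x). Qed.

Lemma continuous_cos_sin_pow (p q : nat) (x : R) :
  continuous (fun x => cos x ^ p * sin x ^ q) x.
Proof. apply continuous_of_ex_derive. auto_derive. auto. Qed.

Lemma is_derive_cos_sin_pow (p q : nat) (x : R) :
  is_derive (fun x => cos x ^ S p * sin x ^ S q) x
    (INR (S q) * cos x ^ S (S p) * sin x ^ q - INR (S p) * cos x ^ p * sin x ^ S (S q)).
Proof.
  auto_derive; auto.
  change (match q with O => 1 | S _ => INR q + 1 end) with (INR (S q)).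
  change (match p with O => 1 | S _ => INR p + 1 end) with (INR (S p)).
  cbn [pow]. ring.
Qed.

Lemma is_derive_cos_sin_pow_sin_form (p q : nat) (x : R) :
  is_derive (fun x => cos x ^ S p * sin x ^ S q) x
    ((INR q + 1) * cos x ^ p * sin x ^ q
     - (INR p + INR q + 2) * cos x ^ p * sin x ^ S (S q)).
Proof.
  refine (eq_ind _ (is_derive _ x) (is_derive_cos_sin_pow p q x) _ _).
  pose proof (sin2_cos2 x) as Hpy. unfold Rsqr in Hpy. rewrite !S_INR. cbn [pow].
  generalize (cos x ^ p) (sin x ^ q). intros c s. nsatz.
Qed.

Lemma is_derive_cos_sin_pow_cos_form (p q : nat) (x : R) :
  is_derive (fun x => cos x ^ S p * sin x ^ S q) x
    ((INR p + INR q + 2) * cos x ^ S (S p) * sin x ^ q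
     - (INR p + 1) * cos x ^ p * sin x ^ q).
Proof.
  refine (eq_ind _ (is_derive _ x) (is_derive_cos_sin_pow p q x) _ _).
  pose proof (sin2_cos2 x) as Hpy. unfold Rsqr in Hpy. rewrite !S_INR. cbn [pow].
  generalize (cos x ^ p) (sin x ^ q). intros c s. nsatz.
Qed.

(* Reduction formulas for [int_0^T cos^p sin^q], valid when [sin T = 0]: the boundary
   terms of the integrations by parts behind them then vanish. *)
Fixpoint sin_pow_integral (T : R) (q : nat) : R :=
  match q with
  | O => T
  | S O => 1 - cos T
  | S (S q') => (INR q' + 1) / (INR q' + 2) * sin_pow_integral T q'
  end.

Fixpoint cos_sin_pow_integral (T : R) (p q : nat) : R :=
  match p with
  | O => sin_pow_integral T q
  | S O => 0
  | S (S p') => (INR p' + 1) / (INR p' + INR q + 2) * cos_sin_pow_integral T p' q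
  end.

Section TrigIntegrals.

Variable T : R.
Hypothesis sin_T : sin T = 0.

Lemma has_integral_sin_pow (q : nat) :
  has_integral (fun x => sin x ^ q) 0 T (sin_pow_integral T q).
Proof.
  enough (H : has_integral (fun x => sin x ^ q) 0 T (sin_pow_integral T q) /\
              has_integral (fun x => sin x ^ S q) 0 T (sin_pow_integral T (S q)))
    by exact (proj1 H).
  induction q as [|q [IH IHS]]; split.
  - eapply has_integral_ext; [| | apply (has_integral_antiderivative (fun x => x) (fun _ => 1))].
    + reflexivity.
    + cbn. ring.
    + intro. auto_derive; auto.
    + intro. apply continuous_const.
  - eapply has_integral_ext; [| | apply (has_integral_antiderivative (fun x => - cos x) sin)].
    + intro. cbn. ring.
    + cbn. rewrite cos_0. ring.
    + intro. auto_derive; auto. ring.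
    + intro. apply continuous_of_ex_derive. auto_derive. auto.
  - exact IHS.
  - assert (Hq : INR q + 2 <> 0) by (pose proof (pos_INR q); lra).
    pose proof (has_integral_antiderivative _ _ 0 T (is_derive_cos_sin_pow_sin_form 0 q)) as Hparts.
    specialize (Hparts (fun x => ltac:(apply continuous_of_ex_derive; auto_derive; auto))).
    eapply has_integral_ext;
      [| | exact (has_integral_lincomb _ _ _ _ _ _ ((INR q + 1) / (INR q + 2)) (- / (INR q + 2)) IH Hparts)].
    + intro x. cbn [pow INR]. field. auto.
    + cbn [sin_pow_integral pow]. rewrite sin_T, sin_0. field. auto.
Qed.

Lemma has_integral_cos_sin_pow (p q : nat) :
  has_integral (fun x => cos x ^ p * sin x ^ q) 0 T (cos_sin_pow_integral T p q).
Proof.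
  enough (H : has_integral (fun x => cos x ^ p * sin x ^ q) 0 T (cos_sin_pow_integral T p q) /\
              has_integral (fun x => cos x ^ S p * sin x ^ q) 0 T (cos_sin_pow_integral T (S p) q))
    by exact (proj1 H).
  assert (Hq : INR q + 1 <> 0) by (pose proof (pos_INR q); lra).
  induction p as [|p [IH IHS]]; split.
  - eapply has_integral_ext; [| | apply (has_integral_sin_pow q)].
    + intro. cbn [pow]. ring.
    + reflexivity.
  - eapply has_integral_ext;
      [| | apply (has_integral_antiderivative (fun x => sin x ^ S q / (INR q + 1)))].
    + reflexivity.
    + cbn [cos_sin_pow_integral]. rewrite sin_T, sin_0. cbn [pow]. field. auto.
    + intro. auto_derive; auto.
      change (match q with O => 1 | S _ => INR q + 1 end) with (INR (S q)).
      rewrite S_INR. field. auto.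
    + intro. apply continuous_cos_sin_pow.
  - exact IHS.
  - assert (Hpq : INR p + INR q + 2 <> 0) by (pose proof (pos_INR p); pose proof (pos_INR q); lra).
    pose proof (has_integral_antiderivative _ _ 0 T (is_derive_cos_sin_pow_cos_form p q)) as Hparts.
    specialize (Hparts (fun x => ltac:(apply continuous_of_ex_derive; auto_derive; auto))).
    eapply has_integral_ext;
      [| | exact (has_integral_lincomb _ _ _ _ _ _
                    ((INR p + 1) / (INR p + INR q + 2)) (/ (INR p + INR q + 2)) IH Hparts)].
    + intro x. cbv beta. field. auto.
    + cbn [cos_sin_pow_integral]. rewrite sin_T, sin_0. cbn [pow]. field. auto.
Qed.

End TrigIntegrals.

Definition sphere_integrand (F : R -> R -> R -> R -> R) (psi th ph : R) : R :=
  F (cos psi) (sin psi * cos th) (sin psi * sin th * cos ph) (sin psi * sin th * sin ph)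
  * (sin psi ^ 2 * sin th).

Definition is_haar_integral (F : R -> R -> R -> R -> R) (v : R) : Prop :=
  exists (g : R -> R -> R) (h : R -> R),
    (forall psi th, has_integral (sphere_integrand F psi th) 0 (2 * PI) (g psi th)) /\
    (forall psi, has_integral (g psi) 0 PI (h psi)) /\
    has_integral h 0 PI (2 * PI ^ 2 * v).

Lemma has_integral_Riemann (f : R -> R) (a b v : R) :
  has_integral f a b v -> Defs.is_RInt f a b v.
Proof.
  intro H. exists (ex_RInt_Reals_0 f a b (ex_intro _ v H)).
  rewrite <- RInt_Reals. apply is_RInt_unique. exact H.
Qed.

Lemma haar_integral_PU2_of_is_haar_integral (F : R -> R -> R -> R -> R) (v : R) :
  is_haar_integral F v -> haar_integral_PU2 F v.
Proof.
  intros (g & h & Hph & Hth & Hpsi). exists g, h.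
  split; [|split]; intros; apply has_integral_Riemann; [apply Hph | apply Hth | exact Hpsi].
Qed.

Lemma is_haar_integral_ext (F G : R -> R -> R -> R -> R) (v w : R) :
  (forall r0 r1 r2 r3, F r0 r1 r2 r3 = G r0 r1 r2 r3) -> v = w ->
  is_haar_integral F v -> is_haar_integral G w.
Proof.
  intros FG <- (g & h & Hph & Hth & Hpsi). exists g, h. repeat split; auto.
  intros psi th. eapply has_integral_ext; [| | apply (Hph psi th)]; auto.
  intro. unfold sphere_integrand. rewrite FG. reflexivity.
Qed.

Lemma is_haar_integral_lincomb (F G : R -> R -> R -> R -> R) (u v k : R) :
  is_haar_integral F u -> is_haar_integral G v ->
  is_haar_integral (fun r0 r1 r2 r3 => k * F r0 r1 r2 r3 + G r0 r1 r2 r3) (k * u + v).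
Proof.
  intros (g1 & h1 & Hph1 & Hth1 & Hpsi1) (g2 & h2 & Hph2 & Hth2 & Hpsi2).
  exists (fun psi th => k * g1 psi th + 1 * g2 psi th), (fun psi => k * h1 psi + 1 * h2 psi).
  repeat split.
  - intros psi th.
    eapply has_integral_ext; [| | exact (has_integral_lincomb _ _ _ _ _ _ k 1 (Hph1 psi th) (Hph2 psi th))].
    + intro. unfold sphere_integrand. ring.
    + reflexivity.
  - intro psi. exact (has_integral_lincomb _ _ _ _ _ _ k 1 (Hth1 psi) (Hth2 psi)).
  - eapply has_integral_ext; [| | exact (has_integral_lincomb _ _ _ _ _ _ k 1 Hpsi1 Hpsi2)].
    + reflexivity.
    + ring.
Qed.

Lemma is_haar_integral_zero : is_haar_integral (fun _ _ _ _ => 0) 0.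
Proof.
  exists (fun _ _ => 0), (fun _ => 0).
  assert (H0 : forall a b, has_integral (fun _ => 0) a b 0).
  { intros a b. eapply has_integral_ext; [| | apply (is_RInt_const a b 0)]; [reflexivity|].
    cbn. unfold mult; cbn. ring. }
  repeat split; intros; [eapply has_integral_ext; [| | apply H0] | apply H0 | ].
  - intro. unfold sphere_integrand. ring.
  - reflexivity.
  - replace (2 * PI ^ 2 * 0) with 0 by ring. apply H0.
Qed.

Definition monomial (a b c d : nat) (r0 r1 r2 r3 : R) : R :=
  r0 ^ a * r1 ^ b * r2 ^ c * r3 ^ d.

Definition monomial_haar_value (a b c d : nat) : R :=
  cos_sin_pow_integral (2 * PI) c d * cos_sin_pow_integral PI b (c + d + 1)
  * cos_sin_pow_integral PI a (b + c + d + 2) / (2 * PI ^ 2).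

(* In hyperspherical coordinates the integrand of a monomial separates into
   [cos^a psi sin^(b+c+d+2) psi], [cos^b th sin^(c+d+1) th] and [cos^c ph sin^d ph]. *)
Lemma is_haar_integral_monomial (a b c d : nat) :
  is_haar_integral (monomial a b c d) (monomial_haar_value a b c d).
Proof.
  set (Iph := cos_sin_pow_integral (2 * PI) c d).
  set (Ith := cos_sin_pow_integral PI b (c + d + 1)).
  set (Ipsi := cos_sin_pow_integral PI a (b + c + d + 2)).
  exists (fun psi th => cos psi ^ a * sin psi ^ (b + c + d + 2)
                        * (cos th ^ b * sin th ^ (c + d + 1)) * Iph).
  exists (fun psi => cos psi ^ a * sin psi ^ (b + c + d + 2) * Ith * Iph).
  repeat split.
  - intros psi th. eapply has_integral_ext;
      [| | exact (has_integral_scal _ _ _ _ (cos psi ^ a * sin psi ^ (b + c + d + 2)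
                    * (cos th ^ b * sin th ^ (c + d + 1))) (has_integral_cos_sin_pow _ sin_2PI c d))].
    + intro. unfold sphere_integrand, monomial. rewrite !Rpow_mult_distr, !pow_add. ring.
    + reflexivity.
  - intro psi. eapply has_integral_ext;
      [| | exact (has_integral_scal _ _ _ _ (cos psi ^ a * sin psi ^ (b + c + d + 2) * Iph)
                    (has_integral_cos_sin_pow _ sin_PI b (c + d + 1)))].
    + intro. cbv beta. ring.
    + fold Ith. ring.
  - eapply has_integral_ext;
      [| | exact (has_integral_scal _ _ _ _ (Ith * Iph)
                    (has_integral_cos_sin_pow _ sin_PI a (b + c + d + 2)))].
    + intro. cbv beta. ring.
    + unfold monomial_haar_value. fold Iph Ith Ipsi. field. apply PI_neq0.
Qed.

Inductive homogeneous : nat -> (R -> R -> R -> R -> R) -> Prop :=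
  | homogeneous_monomial a b c d : homogeneous (a + b + c + d) (monomial a b c d)
  | homogeneous_zero n : homogeneous n (fun _ _ _ _ => 0)
  | homogeneous_lincomb n k F G : homogeneous n F -> homogeneous n G ->
      homogeneous n (fun r0 r1 r2 r3 => k * F r0 r1 r2 r3 + G r0 r1 r2 r3)
  | homogeneous_ext n F G : homogeneous n F ->
      (forall r0 r1 r2 r3, F r0 r1 r2 r3 = G r0 r1 r2 r3) -> homogeneous n G.

Section Exactness.

Variable L : (R -> R -> R -> R -> R) -> R.
Hypothesis L_ext : forall F G : R -> R -> R -> R -> R,
  (forall r0 r1 r2 r3, F r0 r1 r2 r3 = G r0 r1 r2 r3) -> L F = L G.
Hypothesis L_lincomb : forall (k : R) (F G : R -> R -> R -> R -> R),
  L (fun r0 r1 r2 r3 => k * F r0 r1 r2 r3 + G r0 r1 r2 r3) = k * L F + L G.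

Lemma linear_functional_zero : L (fun _ _ _ _ => 0) = 0.
Proof.
  pose proof (L_lincomb 1 (fun _ _ _ _ => 0) (fun _ _ _ _ => 0)) as H.
  rewrite (L_ext _ (fun _ _ _ _ => 0)) in H; [lra|]. intros. ring.
Qed.

Lemma is_haar_integral_homogeneous (n : nat) (F : R -> R -> R -> R -> R) :
  (forall a b c d, (a + b + c + d = n)%nat ->
     L (monomial a b c d) = monomial_haar_value a b c d) ->
  homogeneous n F -> is_haar_integral F (L F).
Proof.
  intros Hmon HF. induction HF as [a b c d|n|n k F G _ IHF _ IHG|n F G _ IHF FG].
  - rewrite Hmon by reflexivity. apply is_haar_integral_monomial.
  - rewrite linear_functional_zero. apply is_haar_integral_zero.
  - rewrite L_lincomb. apply is_haar_integral_lincomb; [apply IHF | apply IHG]; exact Hmon.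
  - apply (is_haar_integral_ext F G (L F)); auto.
Qed.

End Exactness.

Fixpoint sum_upto (n : nat) (f : nat -> R) : R :=
  match n with O => 0 | S k => sum_upto k f + f k end.

Definition eval_at (F : R -> R -> R -> R -> R) (r : R * R * R * R) : R :=
  let '(r0, r1, r2, r3) := r in F r0 r1 r2 r3.

Definition design_average (F : R -> R -> R -> R -> R) : R :=
  sum_upto 11 (fun i => wt i * eval_at F (nth i design_points (0, 0, 0, 0))).

Lemma design_average_ext (F G : R -> R -> R -> R -> R) :
  (forall r0 r1 r2 r3, F r0 r1 r2 r3 = G r0 r1 r2 r3) -> design_average F = design_average G.
Proof. intro FG. unfold design_average. cbn. rewrite !FG. reflexivity. Qed.

Lemma design_average_lincomb (k : R) (F G : R -> R -> R -> R -> R) :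
  design_average (fun r0 r1 r2 r3 => k * F r0 r1 r2 r3 + G r0 r1 r2 r3)
  = k * design_average F + design_average G.
Proof. unfold design_average. cbn. ring. Qed.

Lemma ca_sq : ca ^ 2 = 1 / 3.
Proof.
  unfold ca. rewrite <- Rsqr_pow2, Rsqr_div', Rsqr_sqrt by lra. unfold Rsqr. field.
Qed.

Lemma cb_sq : cb ^ 2 = 2 / 3.
Proof. unfold cb. rewrite <- Rsqr_pow2, Rsqr_sqrt by lra. reflexivity. Qed.

Lemma ca_pow4 : ca ^ 4 = 1 / 9.
Proof. replace (ca ^ 4) with ((ca ^ 2) ^ 2) by ring. rewrite ca_sq. field. Qed.

Lemma cb_pow4 : cb ^ 4 = 4 / 9.
Proof. replace (cb ^ 4) with ((cb ^ 2) ^ 2) by ring. rewrite cb_sq. field. Qed.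

Lemma design_average_monomial (a b c d : nat) : (a + b + c + d = 4)%nat ->
  design_average (monomial a b c d) = monomial_haar_value a b c d.
Proof.
  intro Hdeg. assert (d = 4 - a - b - c)%nat as -> by lia.
  assert (HPI : PI <> 0) by exact PI_neq0.
  destruct a as [|[|[|[|[|a]]]]]; destruct b as [|[|[|[|[|b]]]]];
    destruct c as [|[|[|[|[|c]]]]]; try (exfalso; lia);
    unfold design_average, monomial_haar_value, monomial;
    cbn [sum_upto nth design_points wt design_weights eval_at Nat.add Nat.sub
         cos_sin_pow_integral sin_pow_integral INR pow];
    rewrite ?cos_PI, ?cos_2PI; field_simplify_eq; auto;
    rewrite ?ca_pow4, ?cb_pow4, ?ca_sq, ?cb_sq; field.
Qed.

Lemma homogeneous_mul_monomial (a b c d m : nat) (G : R -> R -> R -> R -> R) :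
  homogeneous m G ->
  homogeneous (a + b + c + d + m) (fun r0 r1 r2 r3 => monomial a b c d r0 r1 r2 r3 * G r0 r1 r2 r3).
Proof.
  induction 1 as [a' b' c' d'|m|m k F G _ IHF _ IHG|m F G _ IHF FG].
  - replace (a + b + c + d + (a' + b' + c' + d'))%nat
      with ((a + a') + (b + b') + (c + c') + (d + d'))%nat by lia.
    eapply homogeneous_ext; [apply homogeneous_monomial|].
    intros. unfold monomial. rewrite !pow_add. ring.
  - eapply homogeneous_ext; [apply homogeneous_zero|]. intros. cbv beta. ring.
  - eapply homogeneous_ext; [exact (homogeneous_lincomb _ k _ _ IHF IHG)|]. intros. cbv beta. ring.
  - eapply homogeneous_ext; [exact IHF|]. intros. cbv beta. rewrite FG. reflexivity.
Qed.

Lemma homogeneous_mul (n m : nat) (F G : R -> R -> R -> R -> R) :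
  homogeneous n F -> homogeneous m G ->
  homogeneous (n + m) (fun r0 r1 r2 r3 => F r0 r1 r2 r3 * G r0 r1 r2 r3).
Proof.
  intros HF HG. induction HF as [a b c d|n|n k F1 F2 _ IH1 _ IH2|n F1 F2 _ IH FG].
  - apply homogeneous_mul_monomial. exact HG.
  - eapply homogeneous_ext; [apply homogeneous_zero|]. intros. cbv beta. ring.
  - eapply homogeneous_ext; [exact (homogeneous_lincomb _ k _ _ IH1 IH2)|]. intros. cbv beta. ring.
  - eapply homogeneous_ext; [exact IH|]. intros. cbv beta. rewrite FG. reflexivity.
Qed.

Lemma homogeneous_linear (F : R -> R -> R -> R -> R) :
  (forall r0 r1 r2 r3, F r0 r1 r2 r3
     = F 1 0 0 0 * r0 + F 0 1 0 0 * r1 + F 0 0 1 0 * r2 + F 0 0 0 1 * r3) ->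
  homogeneous 1 F.
Proof.
  intro HF. eapply homogeneous_ext.
  - exact (homogeneous_lincomb _ (F 1 0 0 0) _ _ (homogeneous_monomial 1 0 0 0)
           (homogeneous_lincomb _ (F 0 1 0 0) _ _ (homogeneous_monomial 0 1 0 0)
           (homogeneous_lincomb _ (F 0 0 1 0) _ _ (homogeneous_monomial 0 0 1 0)
           (homogeneous_lincomb _ (F 0 0 0 1) _ _ (homogeneous_monomial 0 0 0 1)
           (homogeneous_zero 1))))).
  - intros r0 r1 r2 r3. cbv beta. rewrite (HF r0 r1 r2 r3). unfold monomial. ring.
Qed.

Definition homogeneous_C (n : nat) (z : R -> R -> R -> R -> C) : Prop :=
  homogeneous n (fun r0 r1 r2 r3 => fst (z r0 r1 r2 r3)) /\
  homogeneous n (fun r0 r1 r2 r3 => snd (z r0 r1 r2 r3)).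

Lemma homogeneous_C_mul (n m : nat) (z w : R -> R -> R -> R -> C) :
  homogeneous_C n z -> homogeneous_C m w ->
  homogeneous_C (n + m) (fun r0 r1 r2 r3 => Cmul (z r0 r1 r2 r3) (w r0 r1 r2 r3)).
Proof.
  intros [z1 z2] [w1 w2]. split.
  - eapply homogeneous_ext;
      [exact (homogeneous_lincomb _ (-1) _ _ (homogeneous_mul _ _ _ _ z2 w2) (homogeneous_mul _ _ _ _ z1 w1))|].
    intros. unfold Cmul. cbn. ring.
  - eapply homogeneous_ext;
      [exact (homogeneous_lincomb _ 1 _ _ (homogeneous_mul _ _ _ _ z1 w2) (homogeneous_mul _ _ _ _ z2 w1))|].
    intros. unfold Cmul. cbn. ring.
Qed.

Lemma homogeneous_C_conj (n : nat) (z : R -> R -> R -> R -> C) :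
  homogeneous_C n z -> homogeneous_C n (fun r0 r1 r2 r3 => Cconj (z r0 r1 r2 r3)).
Proof.
  intros [z1 z2]. split; [exact z1|].
  eapply homogeneous_ext; [exact (homogeneous_lincomb _ (-1) _ _ z2 (homogeneous_zero n))|].
  intros. unfold Cconj. cbn. ring.
Qed.

Lemma homogeneous_C_su2 (p q : bool) :
  homogeneous_C 1 (fun r0 r1 r2 r3 => su2 r0 r1 r2 r3 p q).
Proof.
  destruct p, q; split; apply homogeneous_linear; intros;
    unfold su2, Cadd, Cmul, Cscale, Ci, Id2, PauliX, PauliY, PauliZ, C0, C1; cbn; ring.
Qed.

Lemma homogeneous_C_moment_entry (a b c d e f g h : bool) :
  homogeneous_C 4 (fun r0 r1 r2 r3 => moment_entry (su2 r0 r1 r2 r3) a b c d e f g h).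
Proof.
  unfold moment_entry.
  apply (homogeneous_C_mul 2 2); apply (homogeneous_C_mul 1 1);
    try apply homogeneous_C_conj; apply homogeneous_C_su2.
Qed.

(* The entries force [v * s_k = 0] for the imaginary part [v] of the phase. *)
Lemma same_in_PU2_su2 (r0 r1 r2 r3 s0 s1 s2 s3 : R) :
  same_in_PU2 (su2 r0 r1 r2 r3) (su2 s0 s1 s2 s3) ->
  0 < s0 * s0 + s1 * s1 + s2 * s2 + s3 * s3 ->
  exists u, u * u = 1 /\ r0 = u * s0 /\ r1 = u * s1 /\ r2 = u * s2 /\ r3 = u * s3.
Proof.
  intros [[u v] [Hnorm H]] Hs. unfold Cnorm2 in Hnorm. cbn in Hnorm.
  pose proof (H false false) as E00. pose proof (H false true) as E01.
  pose proof (H true false) as E10. pose proof (H true true) as E11.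
  unfold su2, Cadd, Cmul, Cscale, Ci, Id2, PauliX, PauliY, PauliZ, C0, C1 in E00, E01, E10, E11.
  cbn in E00, E01, E10, E11.
  injection E00 as E00r E00i. injection E01 as E01r E01i.
  injection E10 as E10r E10i. injection E11 as E11r E11i.
  assert (Hv : v * (s0 * s0 + s1 * s1 + s2 * s2 + s3 * s3) = 0).
  { assert (V0 : v * s0 = 0) by lra. assert (V1 : v * s1 = 0) by lra.
    assert (V2 : v * s2 = 0) by lra. assert (V3 : v * s3 = 0) by lra.
    replace (v * (s0 * s0 + s1 * s1 + s2 * s2 + s3 * s3))
      with ((v * s0) * s0 + (v * s1) * s1 + (v * s2) * s2 + (v * s3) * s3) by ring.
    rewrite V0, V1, V2, V3. ring. }
  apply Rmult_integral in Hv as [-> | Hs0]; [| lra].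
  exists u. repeat split; lra.
Qed.

Lemma ca_pos : 0 < ca.
Proof. unfold ca. apply Rdiv_lt_0_compat; [lra | apply sqrt_lt_R0; lra]. Qed.

Lemma cb_pos : 0 < cb.
Proof. unfold cb. apply sqrt_lt_R0. lra. Qed.

Lemma design_points_distinct (i j : nat) : (i < 11)%nat -> (j < 11)%nat -> i <> j ->
  ~ same_in_PU2 (pt i) (pt j).
Proof.
  pose proof ca_pos. pose proof cb_pos.
  assert (ca * ca = 1 / 3) by (rewrite <- ca_sq; ring).
  assert (cb * cb = 2 / 3) by (rewrite <- cb_sq; ring).
  intros Hi Hj Hij Hsame.
  destruct i as [|[|[|[|[|[|[|[|[|[|[|i]]]]]]]]]]];
    destruct j as [|[|[|[|[|[|[|[|[|[|[|j]]]]]]]]]]]; try lia;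
    unfold pt, pt_mat in Hsame; cbn [nth design_points] in Hsame;
    (apply same_in_PU2_su2 in Hsame; [| nra]);
    destruct Hsame as (u & Hu & E0 & E1 & E2 & E3); nra.
Qed.

Lemma weighted_moment_design_average (a b c d e f g h : bool) :
  let z r0 r1 r2 r3 := moment_entry (su2 r0 r1 r2 r3) a b c d e f g h in
  fst (weighted_moment a b c d e f g h) = design_average (fun r0 r1 r2 r3 => fst (z r0 r1 r2 r3)) /\
  snd (weighted_moment a b c d e f g h) = design_average (fun r0 r1 r2 r3 => snd (z r0 r1 r2 r3)).
Proof.
  unfold weighted_moment, design_average.
  cbn [Csum sum_upto fst snd Cadd Cscale C0 pt pt_mat nth design_points eval_at].
  split; ring.
Qed.

Theorem mainTheorem11 :
  (forall i j : nat, (i < 11)%nat -> (j < 11)%nat -> i <> j ->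
     ~ same_in_PU2 (pt i) (pt j)) /\
  (forall i : nat, (i < 11)%nat -> 0 < wt i) /\
  fold_right Rplus 0 design_weights = 1 /\
  (forall a b c d e f g h : bool,
     haar_integral_PU2
       (fun r0 r1 r2 r3 => fst (moment_entry (su2 r0 r1 r2 r3) a b c d e f g h))
       (fst (weighted_moment a b c d e f g h)) /\
     haar_integral_PU2
       (fun r0 r1 r2 r3 => snd (moment_entry (su2 r0 r1 r2 r3) a b c d e f g h))
       (snd (weighted_moment a b c d e f g h))).
Proof.
  split; [exact design_points_distinct|].
  split.
  { intros i Hi. do 11 (destruct i as [|i]; [unfold wt; cbn; lra|]). lia. }
  split; [cbn; lra|].
  intros a b c d e f g h.
  destruct (weighted_moment_design_average a b c d e f g h) as [-> ->].
  destruct (homogeneous_C_moment_entry a b c d e f g h) as [Hre Him].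
  split; apply haar_integral_PU2_of_is_haar_integral;
    apply (is_haar_integral_homogeneous design_average design_average_ext
             design_average_lincomb 4); auto using design_average_monomial.
Qed.
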